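(* Let $\Omega$ be a finite-dimensional real Euclidean space and $f_1,\dots,f_N \colon \Omega\to\mathbb{R}$ continuous convex functions such that $E = \frac1N\sum_{j=1}^N f_j$ is coercive, and suppose each $f_j$ is $\mu$-strongly convex for some $\mu>0$. Let $\theta^*$ be the minimizer of $E$. Run DualFL (described in the context) with hyperparameters $\rho = 0$ and $\nu\in(0,\mu]$, and suppose that for some $\gamma>0$ the local iterates satisfy, for all $1\le j\le N$ and $n\ge 0$, \[ \Gamma^{n,j}(\theta_j^{(n+1)}) \leq \frac{1}{N\nu(n+1)^{4+\gamma}}. \] Then the sequence $\{\theta^{(n)}\}$ generated by DualFL converges to $\theta^*$, and moreover $\|\theta^{(n)} - \theta^*\|^2 \lesssim \frac{1}{n^2}$ for $n\ge 0$ (for $n \geq 1$).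
   Context: $h$ is $\mu$-strongly convex if $h-\frac{\mu}{2}\|\cdot\|^2$ is convex; $h^*(p)=\sup_x\{\langle p,x\rangle - h(x)\}$ is the Legendre--Fenchel conjugate. $A\lesssim B$ means $A\le CB$ for a constant $C>0$ independent of the iteration counter $n$. DualFL with hyperparameters $\rho\ge 0$, $\nu>0$: set $\theta^{(0)}=\theta_j^{(0)}=0\in\Omega$ ($1\le j\le N$), $\zeta_j^{(0)}=\zeta_j^{(-1)}=0\in\Omega$, $t_0=1$. For $n=0,1,2,\dots$: each client $j$ computes (by some local iterative solver) an approximate minimizer $\theta_j^{(n+1)}\in\Omega$ of $E^{n,j}(\theta) = f_j(\theta) - \nu\langle\zeta_j^{(n)},\theta\rangle$; then $\theta^{(n+1)}=\frac1N\sum_{j=1}^N\theta_j^{(n+1)}$; then with $t_{n+1} = \frac{1-\rho t_n^2 + \sqrt{(1-\rho t_n^2)^2+4t_n^2}}{2}$, $\beta_n = \frac{t_n-1}{t_{n+1}}\cdot\frac{1-t_{n+1}\rho}{1-\rho}$, each client sets $\zeta_j^{(n+1)} = (1+\beta_n)(\zeta_j^{(n)}+\theta^{(n+1)}-\theta_j^{(n+1)}) - \beta_n(\zeta_j^{(n-1)}+\theta^{(n)}-\theta_j^{(n)})$. Primal-dual gap: with $g_j(\theta)=f_j(\theta)-\frac{\nu}{2}\|\theta\|^2$ and $E^{n,j}_{\mathrm d}(\xi) = g_j^*(\xi)+\frac{1}{2\nu}\|\xi-\nu\zeta_j^{(n)}\|^2$, define $\Gamma^{n,j}(\theta) = E^{n,j}(\theta)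 + E^{n,j}_{\mathrm d}(\nu(\zeta_j^{(n)}-\theta))$. *)

(* Omega = 'rV[R]_d with the standard
   Euclidean inner product. *)
From HB Require Import structures.
From mathcomp Require Import all_boot all_order all_algebra.
From mathcomp Require Import all_classical all_reals all_analysis.
Set Implicit Arguments. Unset Strict Implicit. Unset Printing Implicit Defensive.
Import Order.TTheory GRing.Theory Num.Theory.
Import numFieldNormedType.Exports.
Local Open Scope ring_scope.

Section DualFL.
Variables (R : realType) (d : nat).
Notation vec := 'rV[R]_d.

Definition dot (u v : vec) : R := \sum_(i < d) u ord0 i * v ord0 i.
Definition sqnorm (u : vec) : R := dot u u.

Definition convex_fun (h : vec -> R) : Prop :=
  forall (x y : vec) (t : R), 0 <= t -> t <= 1 ->
    h (t *: x + (1 - t) *: y) <= t * h x + (1 - t) * h y.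

Definition strongly_convex (mu : R) (h : vec -> R) : Prop :=
  convex_fun (fun x => h x - mu / 2 * sqnorm x).

Definition coercive (h : vec -> R) : Prop :=
  forall M : R, exists r : R, forall x : vec, r <= Num.sqrt (sqnorm x) -> M <= h x.

Definition fconj (h : vec -> R) (p : vec) : \bar R :=
  ereal_sup (range (fun x : vec => (dot p x - h x)%:E)).

Fixpoint tseq (rho : R) (n : nat) : R :=
  match n with
  | 0 => 1
  | m.+1 => let t := tseq rho m in
      (1 - rho * t ^+ 2 + Num.sqrt ((1 - rho * t ^+ 2) ^+ 2 + 4 * t ^+ 2)) / 2
  end.

Definition beta (rho : R) (n : nat) : R :=
  (tseq rho n - 1) / tseq rho n.+1 * ((1 - tseq rho n.+1 * rho) / (1 - rho)).

Variable N : nat.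

(* thj n j : local iterate theta_j^(n) returned by client j (used for n >= 1);
   theta_j^(0) = 0 is enforced. *)
Definition loc (thj : nat -> 'I_N -> vec) (n : nat) (j : 'I_N) : vec :=
  if n is 0 then 0 else thj n j.

Definition avg (thj : nat -> 'I_N -> vec) (n : nat) : vec :=
  N%:R^-1 *: \sum_(j < N) loc thj n j.

(* (zeta_j^(n), zeta_j^(n-1)) *)
Fixpoint zeta_pair (rho : R) (thj : nat -> 'I_N -> vec) (j : 'I_N) (n : nat)
  : vec * vec :=
  match n with
  | 0 => (0, 0)
  | m.+1 => let zz := zeta_pair rho thj j m in
      ((1 + beta rho m) *: (zz.1 + avg thj m.+1 - loc thj m.+1 j)
        - beta rho m *: (zz.2 + avg thj m - loc thj m j), zz.1)
  end.

Definition zeta rho thj j n : vec := (zeta_pair rho thj j n).1.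

Definition Eloc (f : 'I_N -> vec -> R) (nu rho : R) thj (n : nat) (j : 'I_N)
  (th : vec) : R := f j th - nu * dot (zeta rho thj j n) th.

Definition Edual (f : 'I_N -> vec -> R) (nu rho : R) thj (n : nat) (j : 'I_N)
  (xi : vec) : \bar R :=
  (fconj (fun x => f j x - nu / 2 * sqnorm x)%R xi
  + ((2 * nu)^-1 * sqnorm (xi - nu *: zeta rho thj j n))%R%:E)%E.

Definition Gap (f : 'I_N -> vec -> R) (nu rho : R) thj (n : nat) (j : 'I_N)
  (th : vec) : \bar R :=
  ((Eloc f nu rho thj n j th)%:E
  + Edual f nu rho thj n j (nu *: (zeta rho thj j n - th))%R)%E.

End DualFL.

From HB Require Import structures.
From mathcomp Require Import all_boot all_order all_algebra.
From mathcomp Require Import all_classical all_reals all_analysis.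
From mathcomp Require Import ring lra.
Import Order.TTheory GRing.Theory Num.Theory.
Import numFieldNormedType.Exports.
Local Open Scope classical_set_scope.
Local Open Scope ring_scope.
Set Implicit Arguments. Unset Strict Implicit. Unset Printing Implicit Defensive.

(* DualFL with [rho = 0] is FISTA applied to the dual problem
     minimize  sum_j g_j^*(xi_j) + ||sum_j xi_j||^2 / (2 N nu),   g_j = f_j - nu/2 ||.||^2,
   whose iterates are [xi_j^(n) = nu (zeta_j^(n-1) - theta_j^(n))]: the gap bound says that
   each local solve is an [eps_n]-inexact proximal step, [eps_n = 1 / (N nu (n+1)^(4+gamma))].
   The FISTA Lyapunov function
     t_n^2 (D(xi^(n+1)) - D_min) + sum_j ||t_n xi_j^(n+1) - (t_n - 1) xi_j^(n) - xi_j^opt||^2/(2 nu)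
   then grows by at most [t_n^2 N eps_n = O(1/n - 1/(n+1))] per step, so the dual gap is
   [O(1/n^2)]; and the dual gap dominates [N nu/2 ||theta^(n) - theta^*||^2].
   The dual optimum is [xi_j^opt = s_j - nu theta^*], where the [s_j] are subgradients of the
   [f_j] at [theta^*] summing to 0; they are the rows of a subgradient of the convex infimal
   convolution [Z |-> inf_y sum_j f_j (y + Z_j)], and subgradients of finite convex functions
   are built one coordinate at a time, as in the proof of Hahn--Banach. *)

Section ConvexLine.
Variables (R : realType) (V : lmodType R).

Definition convex_on (phi : V -> R) : Prop :=
  forall (x y : V) (t : R), 0 <= t -> t <= 1 ->
    phi (t *: x + (1 - t) *: y) <= t * phi x + (1 - t) * phi y.

Variables (psi : V -> R) (P : V -> Prop) (E : V).
Hypotheses (psi_convex : convex_on psi) (P0 : P 0)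
  (P_lin : forall H H' a b, P H -> P H' -> P (a *: H + b *: H'))
  (psi_ge0 : forall H, P H -> 0 <= psi H).

Lemma convex_slopes_ge0 H H' a b : P H -> P H' -> 0 < a -> 0 < b ->
  0 <= psi (H' - b *: E) / b + psi (H + a *: E) / a.
Proof.
move=> PH PH' a0 b0; have ab0 : 0 < a + b by rewrite addr_gt0.
pose t := a / (a + b).
have t0 : 0 <= t by rewrite divr_ge0 // ltW.
have t1 : t <= 1 by rewrite ler_pdivrMr // mul1r lerDl ltW.
have t1E : 1 - t = b / (a + b) by rewrite /t; field; rewrite gt_eqF.
have mid : t *: (H' - b *: E) + (1 - t) *: (H + a *: E) = t *: H' + (1 - t) *: H.
  have tb : t * b = (1 - t) * a by rewrite t1E /t; ring.
  by rewrite scalerBr scalerDr !scalerA tb addrACA addNr addr0.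
have := psi_convex (H' - b *: E) (H + a *: E) t0 t1.
rewrite mid => hc; have := psi_ge0 (P_lin t (1 - t) PH' PH).
have -> : psi (H' - b *: E) / b + psi (H + a *: E) / a =
    (a + b) / (a * b) * (t * psi (H' - b *: E) + (1 - t) * psi (H + a *: E)).
  by rewrite t1E /t; field; rewrite !gt_eqF.
move=> h; apply: mulr_ge0; first by rewrite divr_ge0 ?mulr_ge0 ?ltW.
exact: le_trans hc.
Qed.

(* One Hahn--Banach step: [c] is the infimum of the slopes [psi (H + a E) / a], [a > 0]. *)
Lemma convex_nonneg_line : exists c, forall H a, P H -> c * a <= psi (H + a *: E).
Proof.
pose L := [set r | exists H a, [/\ P H, 0 < a & r = psi (H + a *: E) / a]].
have Lne : L !=set0 by exists (psi (0 + 1 *: E) / 1), 0, 1.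
have Llb : has_lbound L.
  exists (- psi (0 - 1 *: E) / 1) => r [H [a [PH a0 ->]]].
  have := convex_slopes_ge0 PH P0 a0 ltr01; lra.
exists (inf L) => H a PH.
have [a0|a0|->] := ltgtP a 0; last by rewrite mulr0 scale0r addr0 psi_ge0.
- have na0 : 0 < - a by rewrite oppr_gt0.
  have : - psi (H - (- a) *: E) / (- a) <= inf L.
    apply: lb_le_inf => // r [H1 [b [PH1 b0 ->]]].
    have := convex_slopes_ge0 PH1 PH b0 na0; rewrite mulNr; lra.
  rewrite scaleNr opprK ler_pdivrMr // mulrN; lra.
- have : inf L <= psi (H + a *: E) / a by apply: ge_inf => //; exists H, a.
  by rewrite ler_pdivlMr.
Qed.

End ConvexLine.

Section Subgradient.
Variables (R : realType) (m n : nat).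
Implicit Types A B C : 'M[R]_(m, n).

Definition mxdot A B : R := \sum_(p : 'I_m * 'I_n) A p.1 p.2 * B p.1 p.2.

Lemma mxdot0r A : mxdot A 0 = 0.
Proof. by rewrite /mxdot big1 // => p _; rewrite mxE mulr0. Qed.

Lemma mxdotDl A B C : mxdot (A + B) C = mxdot A C + mxdot B C.
Proof. by rewrite /mxdot -big_split; apply: eq_bigr => p _; rewrite mxE mulrDl. Qed.

Lemma mxdotDr A B C : mxdot A (B + C) = mxdot A B + mxdot A C.
Proof. by rewrite /mxdot -big_split; apply: eq_bigr => p _; rewrite mxE mulrDr. Qed.

Lemma mxdotZl a A B : mxdot (a *: A) B = a * mxdot A B.
Proof. by rewrite /mxdot mulr_sumr; apply: eq_bigr => p _; rewrite mxE mulrA. Qed.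

Lemma mxdotZr a A B : mxdot A (a *: B) = a * mxdot A B.
Proof. by rewrite /mxdot mulr_sumr; apply: eq_bigr => p _; rewrite mxE mulrCA. Qed.

Lemma mxdot_deltal (k : 'I_m * 'I_n) B : mxdot (delta_mx k.1 k.2) B = B k.1 k.2.
Proof.
rewrite /mxdot (bigD1 k) //= big1 ?addr0 => [|[i j] /= ne_k]; first by rewrite mxE !eqxx mul1r.
by case: k ne_k => k1 k2 ne_k; rewrite mxE -xpair_eqE (negbTE ne_k) mul0r.
Qed.

Definition supported (S : seq ('I_m * 'I_n)) A := forall p, p \notin S -> A p.1 p.2 = 0.

Lemma supported_lin S A B a b : supported S A -> supported S B ->
  supported S (a *: A + b *: B).
Proof. by move=> sA sB p pS; rewrite !mxE sA // sB // !mulr0 addr0. Qed.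

(* Induction on the list of coordinates on which the increment may be supported. *)
Lemma convex_subgradient (phi : 'M[R]_(m, n) -> R) x : convex_on phi ->
  exists S, forall Y, phi x + mxdot S (Y - x) <= phi Y.
Proof.
move=> phi_cvx.
suff [S HS] : exists S, forall H, supported (enum {: 'I_m * 'I_n}) H ->
    phi x + mxdot S H <= phi (x + H).
  exists S => Y; have := HS (Y - x); rewrite [x + _]addrC subrK.
  by apply=> p; rewrite mem_enum.
elim: (enum _) => [|k A [S HS]].
  exists 0 => H sH; have -> : H = 0 by apply/matrixP => i j; rewrite mxE (sH (i, j)).
  by rewrite mxdot0r !addr0.
pose psi H := phi (x + H) - phi x - mxdot S H.
have psi_cvx : convex_on psi.
  move=> U W t t0 t1; rewrite /psi mxdotDr !mxdotZr.
  have -> : x + (t *: U + (1 - t) *: W) = t *: (x + U) + (1 - t) *: (x + W).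
    by apply/matrixP => i j; rewrite !mxE; ring.
  have := phi_cvx (x + U) (x + W) t t0 t1; lra.
have psi_ge0 H : supported A H -> 0 <= psi H by move/HS; rewrite /psi; lra.
have sA0 : supported A 0 by move=> p _; rewrite mxE.
pose E := delta_mx k.1 k.2 : 'M[R]_(m, n).
have [c hc] := convex_nonneg_line E psi_cvx sA0 (@supported_lin A) psi_ge0.
exists (S + c *: E) => H sH; pose a := H k.1 k.2.
have sH0 : supported A (H - a *: E).
  move=> p pA; rewrite !mxE /a.
  have [pk|pk] := eqVneq p k; first by rewrite pk !eqxx mulr1 subrr.
  have -> : (p.1 == k.1) && (p.2 == k.2) = false.
    by apply/negbTE; rewrite -xpair_eqE -!surjective_pairing.
  by rewrite sH ?in_cons ?negb_or ?pk // mulr0 subr0.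
have := hc _ a sH0; rewrite subrK mxdotDl mxdotZl mxdot_deltal /psi -/a; lra.
Qed.

End Subgradient.

Section Euclid.
Variables (R : realType) (d : nat).
Notation vec := 'rV[R]_d.
Implicit Types u v w : vec.

Lemma dotC u v : dot u v = dot v u.
Proof. by apply: eq_bigr => i _; rewrite mulrC. Qed.

Lemma dotDl u v w : dot (u + v) w = dot u w + dot v w.
Proof. by rewrite /dot -big_split; apply: eq_bigr => i _; rewrite mxE mulrDl. Qed.

Lemma dotDr u v w : dot w (u + v) = dot w u + dot w v.
Proof. by rewrite !(dotC w) dotDl. Qed.

Lemma dotZl a u v : dot (a *: u) v = a * dot u v.
Proof. by rewrite /dot mulr_sumr; apply: eq_bigr => i _; rewrite mxE mulrA. Qed.

Lemma dotZr a u v : dot u (a *: v) = a * dot u v.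
Proof. by rewrite !(dotC u) dotZl. Qed.

Lemma dotNl u v : dot (- u) v = - dot u v.
Proof. by rewrite -scaleN1r dotZl mulN1r. Qed.

Lemma dotNr u v : dot u (- v) = - dot u v.
Proof. by rewrite -scaleN1r dotZr mulN1r. Qed.

Lemma dotBl u v w : dot (u - v) w = dot u w - dot v w.
Proof. by rewrite dotDl dotNl. Qed.

Lemma dotBr u v w : dot w (u - v) = dot w u - dot w v.
Proof. by rewrite dotDr dotNr. Qed.

Lemma dot0r u : dot u 0 = 0.
Proof. by rewrite /dot big1 // => i _; rewrite mxE mulr0. Qed.

Lemma dot_suml (I : finType) (F : I -> vec) v :
  dot (\sum_i F i) v = \sum_i dot (F i) v.
Proof.
by rewrite /dot exchange_big /=; apply: eq_bigr => k _; rewrite summxE mulr_suml.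
Qed.

Lemma dot_sumr (I : finType) (F : I -> vec) v :
  dot v (\sum_i F i) = \sum_i dot v (F i).
Proof. by rewrite dotC dot_suml; apply: eq_bigr => i _; rewrite dotC. Qed.

Lemma sqnorm_ge0 u : 0 <= sqnorm u.
Proof. by apply: sumr_ge0 => i _; rewrite -expr2 sqr_ge0. Qed.

Lemma sum_sqnorm_ge0 (I : finType) (u : I -> vec) : 0 <= \sum_i sqnorm (u i).
Proof. by apply: sumr_ge0 => i _; apply: sqnorm_ge0. Qed.

Lemma sqnorm_eq0 u : (sqnorm u == 0) = (u == 0).
Proof.
apply/idP/eqP => [|->]; last by rewrite /sqnorm dot0r.
rewrite /sqnorm /dot psumr_eq0 => [/allP u0|i _]; last by rewrite -expr2 sqr_ge0.
apply/matrixP => i k; rewrite (ord1 i) mxE.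
by have /= := u0 k (mem_index_enum _); rewrite mulf_eq0 orbb => /eqP.
Qed.

Lemma sqnormD u v : sqnorm (u + v) = sqnorm u + 2 * dot u v + sqnorm v.
Proof. by rewrite /sqnorm !dotDl !dotDr (dotC v u); ring. Qed.

Lemma sqnormB u v : sqnorm (u - v) = sqnorm u - 2 * dot u v + sqnorm v.
Proof. by rewrite /sqnorm !dotBl !dotBr (dotC v u); ring. Qed.

Lemma sqnormZ a u : sqnorm (a *: u) = a ^+ 2 * sqnorm u.
Proof. by rewrite /sqnorm dotZl dotZr mulrA. Qed.

Lemma sqnormN u : sqnorm (- u) = sqnorm u.
Proof. by rewrite /sqnorm dotNl dotNr opprK. Qed.

Lemma sqnorm_convex_comb t u v :
  sqnorm (t *: u + (1 - t) *: v) =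
  t * sqnorm u + (1 - t) * sqnorm v - t * (1 - t) * sqnorm (u - v).
Proof. by rewrite sqnormB sqnormD !sqnormZ dotZl dotZr; ring. Qed.

Lemma mxdot_rV u v : mxdot u v = dot u v.
Proof. by rewrite /mxdot -(pair_bigA _ (fun i j => u i j * v i j)) /= big_ord1. Qed.

Lemma mxdot_rows N (A B : 'M[R]_(N, d)) :
  mxdot A B = \sum_(j < N) dot (row j A) (row j B).
Proof.
rewrite /mxdot -(pair_bigA _ (fun i j => A i j * B i j)) /=.
by apply: eq_bigr => j _; apply: eq_bigr => k _; rewrite !mxE.
Qed.

Lemma dot_sqnorm_lbound (mu : R) (b y : vec) : 0 < mu ->
  - sqnorm b / (2 * mu) <= dot b y + mu / 2 * sqnorm y.
Proof.
move=> mu0; have i0 : 0 < (2 * mu)^-1 by rewrite invr_gt0; lra.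
have := sqnorm_ge0 (mu *: y + b).
rewrite sqnormD sqnormZ dotZl (dotC y) -(pmulr_rge0 _ i0).
have -> : (2 * mu)^-1 * (mu ^+ 2 * sqnorm y + 2 * (mu * dot b y) + sqnorm b) =
    mu / 2 * sqnorm y + dot b y + sqnorm b / (2 * mu) by field; rewrite gt_eqF.
lra.
Qed.

Lemma strongly_convex_lbound (h : vec -> R) mu : 0 < mu -> strongly_convex mu h ->
  exists K, forall y, K <= h y.
Proof.
move=> mu0 sc; have [b hb] := convex_subgradient 0 sc.
exists (h 0 - mu / 2 * sqnorm (0 : vec) - sqnorm b / (2 * mu)) => y.
have := hb y; have := dot_sqnorm_lbound b y mu0.
rewrite subr0 mxdot_rV mulNr; lra.
Qed.

(* Letting t -> 0 in the convexity of h - mu/2 ||.||^2 along [x, y]. *)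
Lemma strongly_convex_subgradient (h : vec -> R) mu x s : 0 < mu ->
  strongly_convex mu h -> (forall y, h x + dot s (y - x) <= h y) ->
  forall y, h x + dot s (y - x) + mu / 2 * sqnorm (y - x) <= h y.
Proof.
move=> mu0 sc hs y.
pose a := h y - h x - dot s (y - x); pose c := mu / 2 * sqnorm (y - x).
have le_a t : 0 < t -> t <= 1 -> (1 - t) * c <= a.
  move=> t0 t1; rewrite -(ler_pM2l t0).
  have := sc y x t (ltW t0) t1; rewrite sqnorm_convex_comb.
  have -> : t *: y + (1 - t) *: x = x + t *: (y - x).
    by apply/matrixP => i k; rewrite !mxE; ring.
  have := hs (x + t *: (y - x)); rewrite addrAC subrr add0r dotZr /a /c; lra.
have c0 : 0 <= c by rewrite mulr_ge0 ?sqnorm_ge0 // divr_ge0 // ltW.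
suff : c <= a by rewrite /a /c; lra.
apply/ler_addgt0Pr => e e0; have ec : 0 < e + c by rewrite ltr_wpDr.
have := le_a (e / (e + c)) (divr_gt0 e0 ec).
rewrite ler_pdivrMr // mul1r lerDl => /(_ c0).
have : e / (e + c) * c <= e by rewrite mulrAC ler_pdivrMr //; nra.
lra.
Qed.

Lemma subgradient_sub_half_sqnorm (h : vec -> R) mu nu x s : 0 < mu -> nu <= mu ->
  strongly_convex mu h -> (forall y, h x + dot s (y - x) <= h y) ->
  forall y, h x - nu / 2 * sqnorm x + dot (s - nu *: x) (y - x) <= h y - nu / 2 * sqnorm y.
Proof.
move=> mu0 numu sc hs y; have := strongly_convex_subgradient mu0 sc hs y.
have : nu * sqnorm (y - x) <= mu * sqnorm (y - x) by rewrite ler_wpM2r ?sqnorm_ge0.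
rewrite dotBl dotZl !sqnormB !dotBr (dotC y x) -/(sqnorm x); lra.
Qed.

End Euclid.

Section SumRule.
Variables (R : realType) (d N : nat) (f : 'I_N -> 'rV[R]_d -> R).
Notation vec := 'rV[R]_d.
Hypothesis f_convex : forall j, convex_fun (f j).
Hypothesis f_lbound : forall j, exists K, forall y, K <= f j y.

Definition shifted_sum (Z : 'M[R]_(N, d)) (y : vec) := \sum_j f j (y + row j Z).

Definition inf_shifted_sum Z := inf (range (shifted_sum Z)).

Lemma shifted_sum_lbound Z : has_lbound (range (shifted_sum Z)).
Proof.
have [K hK] := choice f_lbound.
by exists (\sum_j K j) => _ [y _ <-]; apply: ler_sum => j _.
Qed.

Lemma inf_shifted_sum_le Z y : inf_shifted_sum Z <= shifted_sum Z y.
Proof. by apply: ge_inf; [apply: shifted_sum_lbound | exists y]. Qed.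

Lemma inf_shifted_sum_adherent Z e : 0 < e ->
  exists y, shifted_sum Z y < inf_shifted_sum Z + e.
Proof.
move=> e0; have Zne : range (shifted_sum Z) !=set0 by exists (shifted_sum Z 0), 0.
by have [_ [y _ <-] hy] := inf_adherent e0 (conj Zne (shifted_sum_lbound Z)); exists y.
Qed.

Lemma inf_shifted_sum_convex : convex_on inf_shifted_sum.
Proof.
move=> Z1 Z2 t t0 t1; apply/ler_addgt0Pr => e e0.
have [y1 h1] := inf_shifted_sum_adherent Z1 e0.
have [y2 h2] := inf_shifted_sum_adherent Z2 e0.
apply: (le_trans (inf_shifted_sum_le _ (t *: y1 + (1 - t) *: y2))).
have : shifted_sum (t *: Z1 + (1 - t) *: Z2) (t *: y1 + (1 - t) *: y2) <=
       t * shifted_sum Z1 y1 + (1 - t) * shifted_sum Z2 y2.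
  rewrite /shifted_sum !mulr_sumr -big_split /=; apply: ler_sum => j _.
  have -> : t *: y1 + (1 - t) *: y2 + row j (t *: Z1 + (1 - t) *: Z2) =
            t *: (y1 + row j Z1) + (1 - t) *: (y2 + row j Z2).
    by apply/matrixP => i k; rewrite !mxE; ring.
  exact: f_convex.
have t1' : 0 <= 1 - t by rewrite subr_ge0.
have := ler_wpM2l t0 (ltW h1); have := ler_wpM2l t1' (ltW h2).
lra.
Qed.

Variable x : vec.
Hypothesis x_min : forall y, \sum_j f j x <= \sum_j f j y.

Lemma inf_shifted_sum0 : inf_shifted_sum 0 = \sum_j f j x.
Proof.
have sum0 y : shifted_sum 0 y = \sum_j f j y.
  by apply: eq_bigr => j _; rewrite row0 addr0.
apply/eqP; rewrite eq_le -sum0 inf_shifted_sum_le /=.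
apply: lb_le_inf => [|_ [y _ <-]]; first by exists (shifted_sum 0 0), 0.
by rewrite !sum0.
Qed.

(* [s j] is row [j] of a subgradient of the infimal convolution [inf_shifted_sum] at 0. *)
Lemma subgradients_at_sum_min : exists s : 'I_N -> vec, \sum_j s j = 0 /\
  forall j y, f j x + dot (s j) (y - x) <= f j y.
Proof.
have [S hS] := convex_subgradient 0 inf_shifted_sum_convex.
have hZ Z y : \sum_j dot (row j S) (row j Z) <= shifted_sum Z y - \sum_j f j x.
  have := hS Z; rewrite subr0 mxdot_rows inf_shifted_sum0.
  by have := inf_shifted_sum_le Z y; lra.
exists (fun j => row j S); split.
  pose c := \sum_j row j S; apply/eqP; rewrite -sqnorm_eq0 eq_le sqnorm_ge0 andbT.
  have := hZ (\matrix_(j < N) c) (x - c).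
  rewrite /shifted_sum (eq_bigr (fun j => dot (row j S) c)) => [|j _]; last by rewrite rowK.
  rewrite -dot_suml (eq_bigr (fun j => f j x)) => [|j _]; last by rewrite rowK subrK.
  by rewrite subrr.
move=> j y; pose Z := \matrix_(i < N) (if i == j then y - x else 0).
have rZ i : row i Z = if i == j then y - x else 0 by rewrite rowK.
have := hZ Z x; rewrite (bigD1 j) //= big1 => [|i /negbTE ij]; last by rewrite rZ ij dot0r.
rewrite /shifted_sum (bigD1 j) //= [X in _ <= _ - X](bigD1 j) //= rZ eqxx.
rewrite (eq_bigr (fun i => f i x)) => [|i /negbTE ij]; last by rewrite rZ ij addr0.
by rewrite addr0 [x + _]addrC subrK; lra.
Qed.

End SumRule.

Section Gap.
Variables (R : realType) (d N : nat) (f : 'I_N -> 'rV[R]_d -> R) (nu : R).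
Notation vec := 'rV[R]_d.
Hypothesis nu0 : 0 < nu.

(* Keep only the point [y] in the supremum defining [g_j^*]. *)
Lemma Gap_eps_subgradient thj n j (th : vec) eps :
  (Gap f nu 0 thj n j th <= eps%:E)%E ->
  forall y, f j th - nu / 2 * sqnorm th + dot (nu *: (zeta 0 thj j n - th)) (y - th) - eps
            <= f j y - nu / 2 * sqnorm y.
Proof.
move=> hg y; set z := zeta 0 thj j n; set xi := nu *: (z - th).
have hsup : ((dot xi y - (f j y - nu / 2 * sqnorm y))%:E <=
             fconj (fun x => (f j x - nu / 2 * sqnorm x)%R) xi)%E.
  by apply: ereal_sup_ubound; exists y.
have : f j th - nu * dot z th + ((dot xi y - (f j y - nu / 2 * sqnorm y))
        + (2 * nu)^-1 * sqnorm (xi - nu *: z)) <= eps.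
  rewrite -lee_fin; apply: le_trans hg; rewrite /Gap /Edual /Eloc -/z -/xi !EFinD.
  by apply: leeD2l; apply: leeD2r; rewrite -EFinD.
have -> : (2 * nu)^-1 * sqnorm (xi - nu *: z) = nu / 2 * sqnorm th.
  rewrite /xi scalerBr addrAC subrr add0r sqnormN sqnormZ.
  by field; rewrite gt_eqF.
rewrite /xi !dotZl !dotBl !dotBr (dotC th y) /sqnorm !mulrBr; lra.
Qed.

End Gap.

Section Momentum.
Variable R : realType.
Local Notation t := (tseq (0 : R)).

Lemma tseq0S n : t n.+1 = (1 + Num.sqrt (1 + 4 * t n ^+ 2)) / 2.
Proof. by rewrite /= !mul0r subr0 expr1n. Qed.

Lemma tseq0_ge0 n : 0 <= t n.
Proof. by case: n => [|n]; rewrite ?ler01 // tseq0S divr_ge0 ?addr_ge0 ?sqrtr_ge0. Qed.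

Lemma tseq0_rec n : [/\ t n.+1 ^+ 2 - t n.+1 = t n ^+ 2,
  t n + 1 / 2 <= t n.+1 & t n.+1 <= t n + 1].
Proof.
rewrite tseq0S; set s := Num.sqrt _.
have s0 : 0 <= s by apply: sqrtr_ge0.
have t0 := tseq0_ge0 n.
have ss : s ^+ 2 = 1 + 4 * t n ^+ 2 by rewrite sqr_sqrtr // addr_ge0 ?mulr_ge0 ?sqr_ge0.
by split; [lra | have : 2 * t n <= s by nra | have : s <= 2 * t n + 1 by nra]; lra.
Qed.

Lemma tseq0_ge n : n.+2%:R / 2 <= t n.
Proof.
elim: n => [|n IH]; first by rewrite /= divff // pnatr_eq0.
have [_ h _] := tseq0_rec n; apply: le_trans h; move: IH; rewrite -addn1 natrD; lra.
Qed.

Lemma tseq0_le n : t n <= n.+1%:R.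
Proof.
elim: n => [|n IH] //; have [_ _ h] := tseq0_rec n.
by apply: (le_trans h); rewrite -[n.+2]addn1 natrD; lra.
Qed.

Lemma tseq0_ge1 n : 1 <= t n.
Proof. by apply: le_trans (tseq0_ge n); rewrite ler_pdivlMr // mul1r ler_nat. Qed.

Lemma beta0 n : beta 0 n = (t n - 1) / t n.+1.
Proof. by rewrite /beta mulr0 !subr0 divr1 mulr1. Qed.

End Momentum.

Section Mean.
Variables (R : realType) (d N : nat).
Notation vec := 'rV[R]_d.
Hypothesis N_gt0 : (0 < N)%N.

Definition mean (u : 'I_N -> vec) : vec := N%:R^-1 *: \sum_j u j.

Lemma natrN_neq0 : N%:R != 0 :> R.
Proof. by rewrite pnatr_eq0 -lt0n. Qed.

Lemma sum_mean (u : 'I_N -> vec) : \sum_j u j = N%:R *: mean u.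
Proof. by rewrite /mean scalerA mulfV ?natrN_neq0 // scale1r. Qed.

Lemma mean_lin (u v : 'I_N -> vec) a b :
  mean (fun j => a *: u j + b *: v j) = a *: mean u + b *: mean v.
Proof.
rewrite /mean big_split /= -!scaler_sumr !scalerDr !scalerA.
by rewrite (mulrC a) (mulrC b).
Qed.

Lemma meanB (u v : 'I_N -> vec) : mean (fun j => u j - v j) = mean u - mean v.
Proof. by rewrite /mean sumrB scalerBr. Qed.

Lemma sqnorm_mean_le (u : 'I_N -> vec) : N%:R * sqnorm (mean u) <= \sum_j sqnorm (u j).
Proof.
have : 0 <= \sum_j sqnorm (u j - mean u) by apply: sumr_ge0 => j _; apply: sqnorm_ge0.
under eq_bigr do rewrite sqnormB.
rewrite big_split sumrB /= -mulr_sumr -dot_suml sum_mean dotZl sumr_const card_ord.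
rewrite -[sqnorm (mean u) *+ N]mulr_natl -/(sqnorm (mean u)); lra.
Qed.

(* Descent inequality for the smooth dual term [N/2 ||mean xi||^2] at the
   extrapolated point [Y], combined with its convexity along [w = (1-p) A + p B]. *)
Lemma mean_sqnorm_descent (X Y A B w : 'I_N -> vec) (p : R) : 0 <= p -> p <= 1 ->
  (forall j, w j = (1 - p) *: A j + p *: B j) ->
  1 / 2 * \sum_j (sqnorm (X j - w j) - sqnorm (Y j - w j)) <=
  \sum_j dot (Y j - mean Y - X j) (w j - X j) +
  N%:R / 2 * ((1 - p) * sqnorm (mean A) + p * sqnorm (mean B) - sqnorm (mean X)).
Proof.
move=> p0 p1 wE; set Q := \sum_j sqnorm (Y j - X j).
have polar : \sum_j dot (Y j - X j) (w j - X j) =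
    1 / 2 * Q + 1 / 2 * \sum_j (sqnorm (X j - w j) - sqnorm (Y j - w j)).
  rewrite !mulr_sumr -big_split /=; apply: eq_bigr => j _.
  rewrite /sqnorm /dot -sumrB !mulr_sumr -big_split /=.
  by apply: eq_bigr => i _; rewrite !mxE; field.
have shift : \sum_j dot (Y j - mean Y - X j) (w j - X j) =
    \sum_j dot (Y j - X j) (w j - X j) - N%:R * dot (mean Y) (mean w - mean X).
  rewrite -dotZr -meanB -sum_mean dot_sumr -sumrB; apply: eq_bigr => j _.
  by rewrite -dotBl addrAC.
have mean_w : mean w = p *: mean B + (1 - p) *: mean A.
  by rewrite addrC -mean_lin; congr mean; apply: funext => j; exact: wE.
have cs : N%:R * sqnorm (mean Y - mean X) <= Q by rewrite -meanB sqnorm_mean_le.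
have comb := sqnorm_convex_comb p (mean B) (mean A); rewrite -mean_w in comb.
have N0 : 0 <= N%:R :> R by apply: ler0n.
have h1 : 0 <= N%:R * sqnorm (mean w - mean Y) by rewrite mulr_ge0 ?sqnorm_ge0.
have h2 : 0 <= N%:R * (p * (1 - p) * sqnorm (mean B - mean A)).
  by rewrite mulr_ge0 // mulr_ge0 ?sqnorm_ge0 // mulr_ge0 // subr_ge0.
rewrite sqnormB in h1; rewrite sqnormB in cs.
rewrite shift polar dotBr (dotC (mean w)) in h1 *.
have : N%:R * sqnorm (mean w) = N%:R * (p * sqnorm (mean B) + (1 - p) * sqnorm (mean A)
   - p * (1 - p) * sqnorm (mean B - mean A)) by rewrite comb.
lra.
Qed.

End Mean.

Section DualIterates.
Variables (R : realType) (d N : nat) (nu : R) (thj : nat -> 'I_N -> 'rV[R]_d).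
Notation vec := 'rV[R]_d.
Local Notation th := (loc thj).
Hypothesis N_gt0 : (0 < N)%N.

Lemma sum_avg_sub n : \sum_j (avg thj n - th n j) = 0.
Proof.
by rewrite sumrB sumr_const card_ord -scaler_nat scalerA mulfV ?natrN_neq0 ?scale1r ?subrr.
Qed.

Lemma sum_zeta_pair rho n :
  \sum_j (zeta_pair rho thj j n).1 = 0 /\ \sum_j (zeta_pair rho thj j n).2 = 0.
Proof.
elim: n => [|n [IH1 IH2]]; first by split; apply: big1.
split => //=; rewrite sumrB -!scaler_sumr.
have sum_shift k (z : 'I_N -> vec) :
    \sum_j (z j + avg thj k - th k j) = \sum_j z j + \sum_j (avg thj k - th k j).
  by rewrite -big_split /=; apply: eq_bigr => j _; rewrite addrA.
by rewrite !sum_shift !sum_avg_sub IH1 IH2 !addr0 !scaler0 subrr.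
Qed.

(* [zeta_pair] stores [(zeta^(n), zeta^(n-1))], so this is
   [xi_j^(n) = nu (zeta_j^(n-1) - theta_j^(n))], the dual variable of client [j]. *)
Definition dual_iter n j : vec := nu *: ((zeta_pair 0 thj j n).2 - th n j).

Definition dual_extrap n j : vec :=
  if n is m.+1 then (1 + beta 0 m) *: dual_iter n j - beta 0 m *: dual_iter m j else 0.

Lemma mean_dual_iter n : mean (dual_iter n) = - nu *: avg thj n.
Proof.
rewrite /mean /dual_iter -scaler_sumr sumrB (proj2 (sum_zeta_pair 0 n)) sub0r.
by rewrite scalerN scalerA mulrC -scalerA -scaleNr.
Qed.

Lemma zeta_dual_extrap n j : nu *: zeta 0 thj j n = dual_extrap n j - mean (dual_extrap n).
Proof.
case: n => [|m]; first by rewrite /dual_extrap /zeta /mean big1 ?scaler0 ?subr0.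
rewrite (_ : mean _ = (1 + beta 0 m) *: mean (dual_iter m.+1) + (- beta 0 m) *: mean (dual_iter m)).
  rewrite !mean_dual_iter /dual_extrap /dual_iter /zeta /=.
  by apply/matrixP => i k; rewrite !mxE; ring.
by rewrite -mean_lin; congr mean; apply: funext => i; rewrite scaleNr.
Qed.

Lemma loc_dual_extrap n j :
  nu *: th n.+1 j = dual_extrap n j - mean (dual_extrap n) - dual_iter n.+1 j.
Proof.
rewrite -zeta_dual_extrap /dual_iter /zeta /=.
by apply/matrixP => i k; rewrite !mxE; ring.
Qed.

End DualIterates.

Section Lyapunov.
Variables (R : realType) (d N : nat) (g : 'I_N -> 'rV[R]_d -> R) (nu : R)
  (thj : nat -> 'I_N -> 'rV[R]_d) (thstar : 'rV[R]_d) (xistar : 'I_N -> 'rV[R]_d)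
  (eps : nat -> R).
Notation vec := 'rV[R]_d.
Local Notation th := (loc thj).
Local Notation xi := (dual_iter nu thj).
Local Notation t := (tseq (0 : R)).
Hypotheses (N_gt0 : (0 < N)%N) (nu_gt0 : 0 < nu).
Hypothesis xi_eps_subgrad : forall n j y,
  g j (th n.+1 j) + dot (xi n.+1 j) (y - th n.+1 j) - eps n <= g j y.
Hypothesis xistar_subgrad : forall j y, g j thstar + dot (xistar j) (y - thstar) <= g j y.
Hypothesis sum_xistar : \sum_j xistar j = - (N%:R * nu) *: thstar.

(* [dual_loc n j] is [g_j^*(xi_j^(n))] up to [eps], and [dual_obj n] is the dual
   objective [sum_j g_j^*(xi_j) + ||sum_j xi_j||^2 / (2 N nu)] at the iterates,
   since [sum_j xi_j^(n) = - N nu theta^(n)]. *)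
Definition dual_loc n j := dot (xi n j) (th n j) - g j (th n j).
Definition dual_obj n := \sum_j dual_loc n j + N%:R * nu / 2 * sqnorm (avg thj n).
Definition dual_loc_opt j := dot (xistar j) thstar - g j thstar.
Definition dual_opt := \sum_j dual_loc_opt j + N%:R * nu / 2 * sqnorm thstar.
Definition eps_prev n := if n is m.+1 then eps m else 0.

Lemma dual_loc_succ m j :
  dual_loc m.+2 j + dot (th m.+2 j) (xi m.+1 j - xi m.+2 j) <= dual_loc m.+1 j + eps m.
Proof.
have := xi_eps_subgrad m j (th m.+2 j).
by rewrite /dual_loc !dotBr (dotC (th _ _) (xi m.+1 j)) (dotC (th _ _) (xi m.+2 j)); lra.
Qed.

Lemma dual_loc_le_opt n j :
  dual_loc n.+1 j + dot (th n.+1 j) (xistar j - xi n.+1 j) <= dual_loc_opt j.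
Proof.
have := xistar_subgrad j (th n.+1 j).
rewrite /dual_loc /dual_loc_opt !dotBr.
by rewrite (dotC (th _ _) (xistar j)) (dotC (th _ _) (xi n.+1 j)); lra.
Qed.

Lemma dual_loc_lbound m j : dot (xi m.+1 j) thstar - g j thstar <= dual_loc m.+1 j + eps m.
Proof. by have := xi_eps_subgrad m j thstar; rewrite /dual_loc !dotBr; lra. Qed.

Definition fista_comb n j := (1 - (t n)^-1) *: xi n j + (t n)^-1 *: xistar j.

Lemma inv_tseq0_range n : 0 < (t n)^-1 <= 1.
Proof.
have t1 := tseq0_ge1 R n; have t0 : 0 < t n by apply: lt_le_trans t1.
by rewrite invr_gt0 t0 invr_le1 // unitf_gt0.
Qed.

Lemma dual_loc_step n j :
  dual_loc n.+1 j + dot (th n.+1 j) (fista_comb n j - xi n.+1 j)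
  <= (1 - (t n)^-1) * (dual_loc n j + eps_prev n) + (t n)^-1 * dual_loc_opt j.
Proof.
case: n => [|m]; first by rewrite /fista_comb /= invr1 subrr scale0r add0r scale1r
  mul0r add0r mul1r dual_loc_le_opt.
have /andP[p0 p1] := inv_tseq0_range m.+1; set p := (t m.+1)^-1 in p0 p1 *.
have q0 : 0 <= 1 - p by rewrite subr_ge0.
have -> : fista_comb m.+1 j - xi m.+2 j =
    (1 - p) *: (xi m.+1 j - xi m.+2 j) + p *: (xistar j - xi m.+2 j).
  by rewrite /fista_comb !scalerBr addrACA -opprD -scalerDl subrK scale1r.
rewrite dotDr !dotZr.
have := ler_wpM2l q0 (dual_loc_succ m j); have := ler_wpM2l (ltW p0) (dual_loc_le_opt m.+1 j).
rewrite /eps_prev; lra.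
Qed.

Lemma sum_dual_loc_step n :
  \sum_j dual_loc n.+1 j + \sum_j dot (th n.+1 j) (fista_comb n j - xi n.+1 j)
  <= (1 - (t n)^-1) * (\sum_j dual_loc n j + N%:R * eps_prev n)
     + (t n)^-1 * \sum_j dual_loc_opt j.
Proof.
have -> : \sum_j dual_loc n j + N%:R * eps_prev n = \sum_j (dual_loc n j + eps_prev n).
  by rewrite [RHS]big_split /= sumr_const card_ord mulr_natl.
rewrite -big_split /= !mulr_sumr -big_split /=.
by apply: ler_sum => j _; apply: dual_loc_step.
Qed.

Lemma dual_obj_step n :
  1 / (2 * nu) * \sum_j (sqnorm (xi n.+1 j - fista_comb n j)
                         - sqnorm (dual_extrap nu thj n j - fista_comb n j))
  <= (1 - (t n)^-1) * (dual_obj n + N%:R * eps_prev n) + (t n)^-1 * dual_opt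
     - dual_obj n.+1.
Proof.
have /andP[p0 p1] := inv_tseq0_range n; set p := (t n)^-1 in p0 p1 *.
have := mean_sqnorm_descent N_gt0 (xi n.+1) (dual_extrap nu thj n) (ltW p0) p1
  (fun j => erefl (fista_comb n j)).
have -> : \sum_j dot (dual_extrap nu thj n j - mean (dual_extrap nu thj n) - xi n.+1 j)
    (fista_comb n j - xi n.+1 j) = nu * \sum_j dot (th n.+1 j) (fista_comb n j - xi n.+1 j).
  by rewrite mulr_sumr; apply: eq_bigr => j _; rewrite -(loc_dual_extrap _ _ N_gt0) dotZl.
have mean_xistar : mean xistar = - nu *: thstar.
  by rewrite /mean sum_xistar scalerA mulrN mulrA mulVf ?natrN_neq0 ?mul1r ?scaleNr.
rewrite !(mean_dual_iter _ _ N_gt0) mean_xistar !(sqnormZ (- nu)) sqrrN.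
have := sum_dual_loc_step n; rewrite -/p.
set K := \sum_j (sqnorm _ - _); set S := \sum_j dot (th _ _) _.
move=> hsum key; rewrite /dual_obj /dual_opt.
suff : 1 / (2 * nu) * K <= S + N%:R * nu / 2 * ((1 - p) * sqnorm (avg thj n)
    + p * sqnorm thstar - sqnorm (avg thj n.+1)) by lra.
rewrite -(ler_pM2l nu_gt0) (_ : nu * (1 / (2 * nu) * K) = 1 / 2 * K).
  by apply: le_trans key _; rewrite le_eqVlt; apply/predU1P; left; field.
by field; rewrite gt_eqF.
Qed.

Definition fista_dir n j : vec :=
  if n is m.+1 then t m *: xi n j - (t m - 1) *: xi m j - xistar j else - xistar j.

Lemma fista_dir_scale n j :
  t n *: (xi n.+1 j - fista_comb n j) = fista_dir n.+1 j /\
  t n *: (dual_extrap nu thj n j - fista_comb n j) = fista_dir n j.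
Proof.
have tn0 : t n != 0 by rewrite gt_eqF // (lt_le_trans ltr01 (tseq0_ge1 R n)).
split; first by rewrite /fista_comb /fista_dir; apply/matrixP => i k; rewrite !mxE; field.
case: n tn0 => [|m] tn0.
  by rewrite /fista_comb /dual_extrap /fista_dir /= invr1; apply/matrixP => i k;
     rewrite !mxE; ring.
rewrite /fista_comb /dual_extrap /fista_dir beta0; apply/matrixP => i k; rewrite !mxE.
by field; rewrite gt_eqF // (lt_le_trans ltr01 (tseq0_ge1 R m.+1)).
Qed.

Lemma lyapunov_step n :
  t n ^+ 2 * (dual_obj n.+1 - dual_opt) + 1 / (2 * nu) * \sum_j sqnorm (fista_dir n.+1 j)
  <= (t n ^+ 2 - t n) * (dual_obj n - dual_opt + N%:R * eps_prev n)
     + 1 / (2 * nu) * \sum_j sqnorm (fista_dir n j).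
Proof.
have t0 : 0 < t n by apply: lt_le_trans (tseq0_ge1 R n).
have scaled : t n ^+ 2 * \sum_j (sqnorm (xi n.+1 j - fista_comb n j)
                                 - sqnorm (dual_extrap nu thj n j - fista_comb n j))
    = \sum_j sqnorm (fista_dir n.+1 j) - \sum_j sqnorm (fista_dir n j).
  rewrite mulr_sumr -sumrB; apply: eq_bigr => j _.
  by have [<- <-] := fista_dir_scale n j; rewrite mulrBr -!sqnormZ.
have := ler_wpM2l (sqr_ge0 (t n)) (dual_obj_step n).
rewrite mulrCA scaled.
have -> : t n ^+ 2 * ((1 - (t n)^-1) * (dual_obj n + N%:R * eps_prev n)
    + (t n)^-1 * dual_opt - dual_obj n.+1)
  = (t n ^+ 2 - t n) * (dual_obj n + N%:R * eps_prev n) + t n * dual_opt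
    - t n ^+ 2 * dual_obj n.+1 by field; rewrite gt_eqF.
lra.
Qed.

Hypothesis eps_ge0 : forall n, 0 <= eps n.
Hypothesis eps_le : forall n, N%:R * eps n <= (nu * n.+1%:R ^+ 4)^-1.

(* [t_n^2 N eps_n <= 1 / (nu (n+1)^2) <= 2 / (nu (n+1) (n+2))], which telescopes. *)
Lemma weighted_eps_le n : t n ^+ 2 * (N%:R * eps n) <= 2 * (n.+1%:R^-1 - n.+2%:R^-1) / nu.
Proof.
set a : R := n.+1%:R; have a0 : 0 < a by rewrite ltr0n.
rewrite (_ : n.+2%:R = a + 1); last by rewrite /a -addn1 natrD.
have tle : t n ^+ 2 <= a ^+ 2.
  by rewrite ler_sqr ?nnegrE ?tseq0_ge0 ?(ltW a0) //; apply: tseq0_le.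
have hN : 0 <= N%:R * eps n by rewrite mulr_ge0.
apply: le_trans (ler_pM (sqr_ge0 _) hN tle (eps_le n)) _.
rewrite -subr_ge0 (_ : _ - _ = (a - 1) / (nu * a ^+ 2 * (a + 1))).
  by rewrite divr_ge0 ?subr_ge0 ?ler1n // ltW // !mulr_gt0 ?exprn_gt0 // ltr_wpDl.
by field; rewrite !gt_eqF // ltr_wpDl.
Qed.

Lemma lyapunov_bound n :
  t n ^+ 2 * (dual_obj n.+1 - dual_opt) + 1 / (2 * nu) * \sum_j sqnorm (fista_dir n.+1 j)
  <= 1 / (2 * nu) * \sum_j sqnorm (xistar j) + 2 * (2 - n.+1%:R^-1) / nu.
Proof.
elim: n => [|n IH].
  have := lyapunov_step 0.
  have -> : \sum_j sqnorm (fista_dir 0 j) = \sum_j sqnorm (xistar j).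
    by apply: eq_bigr => j _; apply: sqnormN.
  rewrite [t 0]/= expr1n subrr mul0r add0r invr1.
  by move/le_trans; apply; rewrite lerDl divr_ge0 ?ltW //; lra.
have := lyapunov_step n.+1; have [-> _ _] := tseq0_rec R n; rewrite [eps_prev _]/= => step.
apply: le_trans step _; have := weighted_eps_le n.
have -> : 2 * (2 - n.+2%:R^-1) / nu
    = 2 * (2 - n.+1%:R^-1) / nu + 2 * (n.+1%:R^-1 - n.+2%:R^-1) / nu.
  by move: (ler0n R n) => n0; field; rewrite !gt_eqF //; lra.
by rewrite [t n ^+ 2 * (_ + N%:R * _)]mulrDr addrAC addrA; apply: lerD.
Qed.

Lemma sqnorm_avg_le_dual_gap m :
  N%:R * nu / 2 * sqnorm (avg thj m.+1 - thstar)
  <= dual_obj m.+1 - dual_opt + N%:R * eps m.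
Proof.
have : \sum_j (dot (xi m.+1 j) thstar - g j thstar) <= \sum_j (dual_loc m.+1 j + eps m).
  by apply: ler_sum => j _; apply: dual_loc_lbound.
have -> : \sum_j (dot (xi m.+1 j) thstar - g j thstar)
    = - (N%:R * nu) * dot (avg thj m.+1) thstar - \sum_j g j thstar.
  rewrite sumrB -dot_suml (sum_mean N_gt0 (xi m.+1)) (mean_dual_iter _ _ N_gt0).
  by rewrite scalerA dotZl mulrN.
have -> : \sum_j (dual_loc m.+1 j + eps m) = \sum_j dual_loc m.+1 j + N%:R * eps m.
  by rewrite big_split /= sumr_const card_ord mulr_natl.
have -> : dual_opt = - (N%:R * nu) / 2 * sqnorm thstar - \sum_j g j thstar.
  rewrite /dual_opt /dual_loc_opt sumrB -dot_suml sum_xistar dotZl.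
  by rewrite -/(sqnorm thstar); field.
rewrite /dual_obj sqnormB; lra.
Qed.

Let half_inv_nu_ge0 : 0 <= 1 / (2 * nu).
Proof. by rewrite div1r invr_ge0 mulr_ge0 // ltW. Qed.

Definition lyapunov_const := 1 / (2 * nu) * \sum_j sqnorm (xistar j) + 4 / nu.

Lemma lyapunov_const_ge0 : 0 <= lyapunov_const.
Proof.
have := mulr_ge0 half_inv_nu_ge0 (sum_sqnorm_ge0 xistar).
by rewrite /lyapunov_const => h; apply: addr_ge0 h _; rewrite divr_ge0 // ltW.
Qed.

Lemma dual_gap_le m : dual_obj m.+1 - dual_opt <= 4 * lyapunov_const / m.+1%:R ^+ 2.
Proof.
set a : R := m.+1%:R; have a0 : 0 < a by rewrite ltr0n.
have t0 : 0 < t m := lt_le_trans ltr01 (tseq0_ge1 R m).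
have weighted : t m ^+ 2 * (dual_obj m.+1 - dual_opt) <= lyapunov_const.
  have := lyapunov_bound m; rewrite -/a /lyapunov_const.
  have := mulr_ge0 half_inv_nu_ge0 (sum_sqnorm_ge0 (fista_dir m.+1)).
  have : 2 * (2 - a^-1) / nu <= 4 / nu.
    rewrite ler_pM2r ?invr_gt0 //; have : 0 <= a^-1 by rewrite invr_ge0 ltW.
    move: (a^-1) => b; lra.
  move: (2 * (2 - a^-1) / nu) => q; lra.
have ta : (a / 2) ^+ 2 <= t m ^+ 2.
  have a2 : 0 <= a / 2 by rewrite divr_ge0 // ltW.
  have : a / 2 <= t m.
    apply: le_trans (tseq0_ge R m); apply: ler_wpM2r; rewrite ?invr_ge0 ?ler0n //.
    by rewrite ler_nat.
  by rewrite !expr2 => h; apply: ler_pM.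
apply: le_trans (_ : lyapunov_const / t m ^+ 2 <= _).
  by rewrite ler_pdivlMr ?exprn_gt0 // mulrC.
rewrite (_ : 4 * lyapunov_const / a ^+ 2 = lyapunov_const / (a / 2) ^+ 2); last first.
  by field; rewrite gt_eqF.
by rewrite ler_wpM2l ?lyapunov_const_ge0 // lef_pV2 // posrE exprn_gt0 // divr_gt0 ?ltr0n.
Qed.

Definition rate_const := 2 / (N%:R * nu) * (4 * lyapunov_const + 1 / nu).

Lemma rate_const_gt0 : 0 < rate_const.
Proof.
have N0 : 0 < N%:R :> R by rewrite ltr0n.
apply: mulr_gt0; first by rewrite divr_gt0 // mulr_gt0.
by apply: ltr_wpDl; rewrite ?mulr_ge0 ?lyapunov_const_ge0 ?divr_gt0.
Qed.

Lemma sqnorm_avg_rate m : sqnorm (avg thj m.+1 - thstar) <= rate_const / m.+1%:R ^+ 2.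
Proof.
set a : R := m.+1%:R; have a1 : 1 <= a by rewrite ler1n.
have a0 : 0 < a := lt_le_trans ltr01 a1.
have N0 : 0 < N%:R :> R by rewrite ltr0n.
have eps_le2 : N%:R * eps m <= 1 / nu / a ^+ 2.
  apply: le_trans (eps_le m) _; rewrite -/a -mulrA -invfM div1r.
  by rewrite lef_pV2 ?posrE ?mulr_gt0 ?exprn_gt0 // ler_pM2l // ler_weXn2l.
have hpos : 0 < N%:R * nu / 2 by rewrite divr_gt0 ?mulr_gt0.
rewrite -(ler_pM2l hpos); apply: le_trans (sqnorm_avg_le_dual_gap m) _.
have -> : N%:R * nu / 2 * (rate_const / a ^+ 2) = 4 * lyapunov_const / a ^+ 2 + 1 / nu / a ^+ 2.
  by rewrite /rate_const; field; rewrite !gt_eqF.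
exact: lerD (dual_gap_le m) eps_le2.
Qed.

End Lyapunov.

Lemma gap_tolerance_bound (R : realType) (N : nat) (nu gamma : R) n :
  (0 < N)%N -> 0 < nu -> 0 < gamma ->
  let eps := (N%:R * nu * n.+1%:R `^ (4 + gamma))^-1 in
  0 <= eps /\ N%:R * eps <= (nu * n.+1%:R ^+ 4)^-1.
Proof.
move=> N0 nu0 gamma0 eps; have a0 : 0 < n.+1%:R :> R by rewrite ltr0n.
have pow_le : n.+1%:R ^+ 4 <= n.+1%:R `^ (4 + gamma) :> R.
  rewrite -powR_mulrn ?ler0n // ler_powR ?ler1n //; lra.
have pow_gt0 : 0 < n.+1%:R `^ (4 + gamma) :> R by apply: lt_le_trans pow_le; rewrite exprn_gt0.
have eps_gt0 : 0 < eps by rewrite invr_gt0 !mulr_gt0 ?ltr0n.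
split; first exact: ltW.
rewrite (_ : N%:R * eps = (nu * n.+1%:R `^ (4 + gamma))^-1).
  by rewrite lef_pV2 ?posrE ?mulr_gt0 ?exprn_gt0 // ler_pM2l.
by rewrite /eps; field; rewrite !gt_eqF ?ltr0n.
Qed.

Section Convergence.
Variables (R : realType) (d : nat).
Notation vec := 'rV[R]_d.

(* [`|v|] is the sup norm of the matrix [v], which is below the Euclidean norm. *)
Lemma norm_lt_of_sqnorm (v : vec) (e : R) : 0 < e -> sqnorm v < e ^+ 2 -> `|v| < e.
Proof.
move=> e0 hv; rewrite (_ : `|v| = mx_norm v) // mx_normrE.
apply: bigmax_lt => // [[i k]] _ /=; rewrite (ord1 i).
have hk : `|v ord0 k| ^+ 2 <= sqnorm v.
  rewrite real_normK ?num_real // /sqnorm /dot (bigD1 k) //= -expr2 lerDl.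
  by apply: sumr_ge0 => l _; rewrite -expr2 sqr_ge0.
by rewrite -(ltr_pXn2r (_ : 0 < 2)%N) ?nnegrE ?(ltW e0) //; apply: le_lt_trans hv.
Qed.

Lemma cvg_of_sqnorm_rate (u : nat -> vec) l C :
  (forall n, sqnorm (u n.+1 - l) <= C / n.+1%:R ^+ 2) -> u @ \oo --> l.
Proof.
move=> rate; apply/cvgrPdist_lt => e e0; have e20 : 0 < e ^+ 2 by rewrite exprn_gt0.
exists (Num.truncn (C / e ^+ 2)).+1 => // -[|m] //= hm.
rewrite -normrN opprB; apply: norm_lt_of_sqnorm => //; apply: le_lt_trans (rate m) _.
rewrite ltr_pdivrMr ?exprn_gt0 ?ltr0n // mulrC -ltr_pdivrMr //.
have : C / e ^+ 2 < m.+1%:R.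
  by apply: lt_le_trans (truncnS_gt _) _; rewrite ler_nat.
have : m.+1%:R <= m.+1%:R ^+ 2 :> R by rewrite expr2 ler_peMl ?ler0n // ler1n.
lra.
Qed.

End Convergence.

Theorem theorem3p2 (R : realType) (d N : nat) (f : 'I_N -> 'rV[R]_d -> R)
  (mu nu gamma : R) (thstar : 'rV[R]_d) (thj : nat -> 'I_N -> 'rV[R]_d) :
  (0 < N)%N ->
  (forall j, continuous (f j)) ->
  (forall j, convex_fun (f j)) ->
  coercive (fun th => N%:R^-1 * \sum_(j < N) f j th) ->
  0 < mu ->
  (forall j, strongly_convex mu (f j)) ->
  (forall th, N%:R^-1 * \sum_(j < N) f j thstar <= N%:R^-1 * \sum_(j < N) f j th) ->
  0 < nu -> nu <= mu ->
  0 < gamma ->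
  (forall (n : nat) (j : 'I_N),
     (Gap f nu 0 thj n j (thj n.+1 j)
       <= ((N%:R * nu * (n.+1%:R `^ (4 + gamma)))^-1)%:E)%E) ->
  avg thj @ \oo --> thstar /\
  exists C : R, 0 < C /\
    forall n : nat, (1 <= n)%N -> sqnorm (avg thj n - thstar) <= C / (n%:R ^+ 2).
Proof.
(* Continuity and coercivity only ensure that the minimizer exists; it is given. *)
move=> N0 _ f_cvx _ mu0 f_sc thstar_min nu0 numu gamma0 gap_le.
have sum_min y : \sum_j f j thstar <= \sum_j f j y.
  by have := thstar_min y; rewrite ler_pM2l // invr_gt0 ltr0n.
have [s [sum_s s_subgrad]] := subgradients_at_sum_min f_cvx
  (fun j => strongly_convex_lbound mu0 (f_sc j)) sum_min.
pose xistar j := s j - nu *: thstar.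
have sum_xistar : \sum_j xistar j = - (N%:R * nu) *: thstar.
  by rewrite sumrB sum_s sumr_const card_ord sub0r -scaler_nat scalerA mulrC scaleNr.
pose eps n := (N%:R * nu * n.+1%:R `^ (4 + gamma))^-1.
have rate := sqnorm_avg_rate (g := fun j y => f j y - nu / 2 * sqnorm y) (eps := eps)
  N0 nu0 (fun n j => Gap_eps_subgradient nu0 (gap_le n j))
  (fun j => subgradient_sub_half_sqnorm mu0 numu (f_sc j) (s_subgrad j)) sum_xistar
  (fun n => (gap_tolerance_bound n N0 nu0 gamma0).1)
  (fun n => (gap_tolerance_bound n N0 nu0 gamma0).2).
split; first exact: cvg_of_sqnorm_rate rate.
by exists (rate_const nu xistar); split => [|[|n] //]; apply: rate_const_gt0.
Qed.
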